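(* Let $\Phi\colon\mathbb X\rightrightarrows\mathbb Y$ have closed graph, $(\bar x,\bar y)\in\operatorname{gph}\Phi$ and $u\in\mathbb S_{\mathbb X}$. If $\Phi$ is quasi-normal in direction $u$ at $(\bar x,\bar y)$ with respect to some orthonormal basis $\{e_1,\dots,e_m\}$ of $\mathbb Y$, then $\Phi$ is strongly asymptotically regular at $(\bar x,\bar y)$ in direction $u$ and metrically subregular at $(\bar x,\bar y)$ in direction $u$.
   Context: $\widehat D^*$ regular coderivative; $D^*\Phi((\bar x,\bar y);(u,v))(y^* )=\{x^*\mid(x^*,-y^* )\in\mathcal N_{\operatorname{gph}\Phi}((\bar x,\bar y);(u,v))\}$ with $\mathcal N_Q(\bar z;w)$ the directional limiting normal cone (all limits of $\eta_k\in\widehat{\mathcal N}_Q(\bar z+t_kw_k)$, $w_k\to w$, $t_k\searrow0$); $\ker\Psi=\{y^*\mid0\in\Psi(y^* )\}$, $\operatorname{Im}\Psi=\bigcup_z\Psi(z)$. Quasi-normality in direction $u$ w.r.t. $\{e_i\}$: there is no nonzero $\lambda\in\ker D^*\Phi((\bar x,\bar y);(u,0))$ for which there exist $\{(x_k,y_k)\}\subset\operatorname{gph}\Phi$ with $x_k\ne\bar x$, $\{\lambda_k\}\subset\mathbb Y$, $\{\eta_k\}\subset\mathbb X$ with $x_k\to\bar x$, $y_k\to\bar y$, $\lambda_k\to\lambda$, $\eta_k\to0$, $(x_k-\bar x)/\|x_k-\bar x\|\to u$, $(y_k-\bar y)/\|x_k-\bar x\|\to0$, $\eta_k\in\widehat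 D^*\Phi(x_k,y_k)(\lambda_k)$ and $\langle\lambda,e_i\rangle\langle y_k-\bar y,e_i\rangle>0$ whenever $\langle\lambda,e_i\rangle\ne0$. Strong asymptotic regularity in direction $u$: for all $\{(x_k,y_k)\}\subset\operatorname{gph}\Phi$, $\{x_k^*\}$, $\{\lambda_k\}$, $x^*,y^*$ with $x_k\notin\Phi^{-1}(\bar y)$, $y_k\ne\bar y$, $x_k^*\in\widehat D^*\Phi(x_k,y_k)(\lambda_k)$, $x_k\to\bar x$, $y_k\to\bar y$, $x_k^*\to x^*$, $(x_k-\bar x)/\|x_k-\bar x\|\to u$, $(y_k-\bar y)/\|x_k-\bar x\|\to0$, $\|\lambda_k\|\to\infty$, $(y_k-\bar y)/\|y_k-\bar y\|-\lambda_k/\|\lambda_k\|\to0$, $(\|y_k-\bar y\|/\|x_k-\bar x\|)\lambda_k\to y^*$, we have $x^*\in\operatorname{Im}D^*\Phi((\bar x,\bar y);(u,0))$. Metric subregularity in direction $u$: there are $\varepsilon,\delta,\kappa>0$ with $\operatorname{dist}(x,\Phi^{-1}(\bar y))\le\kappa\operatorname{dist}(\bar y,\Phi(x))$ for all $x\in\bar x+\mathbb B_{\varepsilon,\delta}(u)$, where $\mathbb B_{\varepsilon,\delta}(u)=\{v\mid \|\|v\|u-\|u\|v\|\le\delta\|u\|\|v\|,\ \|v\|\le\varepsilon\}$. *)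

From HB Require Import structures.
From mathcomp Require Import all_boot all_order all_algebra.
From mathcomp Require Import all_classical all_reals all_analysis.
Set Implicit Arguments. Unset Strict Implicit. Unset Printing Implicit Defensive.
Import Order.TTheory GRing.Theory Num.Theory.
Import numFieldNormedType.Exports.
Local Open Scope classical_set_scope.
Local Open Scope ring_scope.

(* Euclidean spaces X = R^n, Y = R^m realised as row vectors 'rV[R]_n with the
   standard inner product and the induced Euclidean norm. Convergence of
   sequences uses the library topology on 'rV (equivalent to the Euclidean one). *)

Definition dotv (R : realType) (n : nat) (u v : 'rV[R]_n) : R :=
  \sum_(i < n) u ord0 i * v ord0 i.

Definition enorm (R : realType) (n : nat) (u : 'rV[R]_n) : R := Num.sqrt (dotv u u).

Definition pdot (R : realType) (n m : nat) (p q : 'rV[R]_n * 'rV[R]_m) : R :=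
  dotv p.1 q.1 + dotv p.2 q.2.
Definition pnorm (R : realType) (n m : nat) (p : 'rV[R]_n * 'rV[R]_m) : R :=
  Num.sqrt (pdot p p).

Definition gph (R : realType) (n m : nat) (Phi : 'rV[R]_n -> set 'rV[R]_m)
  : set ('rV[R]_n * 'rV[R]_m) := [set p | Phi p.1 p.2].

(* regular (Frechet) normal cone of Q at z (empty if z \notin Q):
   limsup_{w ->_Q z} <eta, w - z> / ||w - z|| <= 0 *)
Definition rnormal (R : realType) (n m : nat) (Q : set ('rV[R]_n * 'rV[R]_m))
  (z : 'rV[R]_n * 'rV[R]_m) : set ('rV[R]_n * 'rV[R]_m) :=
  [set eta | Q z /\
    forall eps : R, 0 < eps -> exists2 del : R, 0 < del &
      forall w, Q w -> pnorm (w.1 - z.1, w.2 - z.2) < del ->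
        pdot eta (w.1 - z.1, w.2 - z.2) <= eps * pnorm (w.1 - z.1, w.2 - z.2)].

Definition dlnormal (R : realType) (n m : nat) (Q : set ('rV[R]_n * 'rV[R]_m))
  (z w : 'rV[R]_n * 'rV[R]_m) : set ('rV[R]_n * 'rV[R]_m) :=
  [set eta | exists (t : nat -> R) (wk etak : nat -> 'rV[R]_n * 'rV[R]_m),
     (forall k, 0 < t k) /\ t @ \oo --> (0 : R) /\
     wk @ \oo --> w /\ etak @ \oo --> eta /\
     forall k, rnormal Q (z.1 + t k *: (wk k).1, z.2 + t k *: (wk k).2) (etak k)].

Definition rcoder (R : realType) (n m : nat) (Phi : 'rV[R]_n -> set 'rV[R]_m)
  (x : 'rV[R]_n) (y ystar : 'rV[R]_m) : set 'rV[R]_n :=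
  [set xstar | rnormal (gph Phi) (x, y) (xstar, - ystar)].

Definition dlcoder (R : realType) (n m : nat) (Phi : 'rV[R]_n -> set 'rV[R]_m)
  (x : 'rV[R]_n) (y : 'rV[R]_m) (u : 'rV[R]_n) (v : 'rV[R]_m) (ystar : 'rV[R]_m)
  : set 'rV[R]_n :=
  [set xstar | dlnormal (gph Phi) (x, y) (u, v) (xstar, - ystar)].

Definition mker (R : realType) (n m : nat) (Psi : 'rV[R]_m -> set 'rV[R]_n)
  : set 'rV[R]_m := [set ys | Psi ys 0].
Definition mim (R : realType) (n m : nat) (Psi : 'rV[R]_m -> set 'rV[R]_n)
  : set 'rV[R]_n := [set xs | exists ys, Psi ys xs].

Definition orthonormal_basis (R : realType) (m : nat) (e : 'I_m -> 'rV[R]_m) : Prop :=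
  forall i j : 'I_m, dotv (e i) (e j) = (i == j)%:R.

Definition quasi_normal_dir (R : realType) (n m : nat) (Phi : 'rV[R]_n -> set 'rV[R]_m)
  (xb : 'rV[R]_n) (yb : 'rV[R]_m) (u : 'rV[R]_n) (e : 'I_m -> 'rV[R]_m) : Prop :=
  ~ exists lam : 'rV[R]_m,
      lam != 0 /\ mker (dlcoder Phi xb yb u 0) lam /\
      exists (xk : nat -> 'rV[R]_n) (yk : nat -> 'rV[R]_m)
             (lamk : nat -> 'rV[R]_m) (etak : nat -> 'rV[R]_n),
        (forall k, gph Phi (xk k, yk k)) /\ (forall k, xk k != xb) /\
        xk @ \oo --> xb /\ yk @ \oo --> yb /\ lamk @ \oo --> lam /\
        etak @ \oo --> (0 : 'rV[R]_n) /\
        (fun k => (enorm (xk k - xb))^-1 *: (xk k - xb)) @ \oo --> u /\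
        (fun k => (enorm (xk k - xb))^-1 *: (yk k - yb)) @ \oo --> (0 : 'rV[R]_m) /\
        (forall k, rcoder Phi (xk k) (yk k) (lamk k) (etak k)) /\
        (forall k (i : 'I_m), dotv lam (e i) != 0 ->
             0 < dotv lam (e i) * dotv (yk k - yb) (e i)).

Definition strong_asym_reg_dir (R : realType) (n m : nat) (Phi : 'rV[R]_n -> set 'rV[R]_m)
  (xb : 'rV[R]_n) (yb : 'rV[R]_m) (u : 'rV[R]_n) : Prop :=
  forall (xk : nat -> 'rV[R]_n) (yk : nat -> 'rV[R]_m) (xsk : nat -> 'rV[R]_n)
         (lamk : nat -> 'rV[R]_m) (xs : 'rV[R]_n) (ys : 'rV[R]_m),
    (forall k, gph Phi (xk k, yk k)) ->
    (forall k, ~ Phi (xk k) yb) ->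
    (forall k, yk k != yb) ->
    (forall k, rcoder Phi (xk k) (yk k) (lamk k) (xsk k)) ->
    xk @ \oo --> xb -> yk @ \oo --> yb -> xsk @ \oo --> xs ->
    (fun k => (enorm (xk k - xb))^-1 *: (xk k - xb)) @ \oo --> u ->
    (fun k => (enorm (xk k - xb))^-1 *: (yk k - yb)) @ \oo --> (0 : 'rV[R]_m) ->
    (fun k => enorm (lamk k)) @ \oo --> +oo ->
    (fun k => (enorm (yk k - yb))^-1 *: (yk k - yb) - (enorm (lamk k))^-1 *: lamk k)
       @ \oo --> (0 : 'rV[R]_m) ->
    (fun k => (enorm (yk k - yb) / enorm (xk k - xb)) *: lamk k) @ \oo --> ys ->
    mim (dlcoder Phi xb yb u 0) xs.

(* distance to a set, +oo for the empty set *)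
Definition edist (R : realType) (n : nat) (x : 'rV[R]_n) (A : set 'rV[R]_n) : \bar R :=
  ereal_inf [set (enorm (x - a))%:E | a in A].

Definition Bdir (R : realType) (n : nat) (eps del : R) (u : 'rV[R]_n) : set 'rV[R]_n :=
  [set v | enorm (enorm v *: u - enorm u *: v) <= del * enorm u * enorm v /\
           enorm v <= eps].

Definition metric_subreg_dir (R : realType) (n m : nat) (Phi : 'rV[R]_n -> set 'rV[R]_m)
  (xb : 'rV[R]_n) (yb : 'rV[R]_m) (u : 'rV[R]_n) : Prop :=
  exists eps del kap : R, 0 < eps /\ 0 < del /\ 0 < kap /\
    forall x : 'rV[R]_n, Bdir eps del u (x - xb) ->
      (edist x [set z | Phi z yb] <= kap%:E * edist yb (Phi x))%E.

(* Quasi-normality forbids every sequence (x_k, y_k) in gph Phi approaching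
   (xb, yb) in direction (u, 0), with y_k <> yb and regular normals
   (eta_k, -lam_k), eta_k -> 0, whose multipliers lam_k are asymptotically the
   unit vectors (y_k - yb) / |y_k - yb|: along a subsequence where these unit
   vectors converge, their limit is a nonzero element of the kernel of the
   directional coderivative that eventually agrees in sign with y_k - yb on
   every e_i.
   Strong asymptotic regularity then holds vacuously, since dividing lam_k and
   x*_k by |lam_k| produces such a sequence.  If metric subregularity failed,
   there would be points x0 -> xb in direction u with
   a := dist(x0, Phi^-1(yb)) > K^2 dist(yb, Phi(x0)) and K -> oo; minimising
   |y - yb| + (K / a) |x - x0|^2 over the graph (Ekeland's principle in its
   quadratic form) gives nearby points whose Fermat condition is again such a
   sequence. *)

From Pilot Require Import Defs.
From HB Require Import structures.
From mathcomp Require Import all_boot all_order all_algebra.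
From mathcomp Require Import all_classical all_reals all_analysis.
From mathcomp Require Import ring lra.
Set Implicit Arguments. Unset Strict Implicit. Unset Printing Implicit Defensive.
Import Order.TTheory GRing.Theory Num.Theory.
Import numFieldNormedType.Exports.
Local Open Scope classical_set_scope.
Local Open Scope ring_scope.

Section euclidean.
Variables (R : realType) (n : nat).
Implicit Types (u v w : 'rV[R]_n).

Lemma dotvC u v : dotv u v = dotv v u.
Proof. by apply: eq_bigr => i _; rewrite mulrC. Qed.

Lemma dotvDl u v w : dotv (u + v) w = dotv u w + dotv v w.
Proof. by rewrite /dotv -big_split; apply: eq_bigr => i _; rewrite !mxE mulrDl. Qed.

Lemma dotvZl (c : R) u w : dotv (c *: u) w = c * dotv u w.
Proof. by rewrite /dotv mulr_sumr; apply: eq_bigr => i _; rewrite !mxE mulrA. Qed.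

Lemma dotvNl u w : dotv (- u) w = - dotv u w.
Proof. by rewrite -scaleN1r dotvZl mulN1r. Qed.

Lemma dotvDr u v w : dotv w (u + v) = dotv w u + dotv w v.
Proof. by rewrite dotvC dotvDl !(dotvC w). Qed.

Lemma dotvZr (c : R) u w : dotv w (c *: u) = c * dotv w u.
Proof. by rewrite dotvC dotvZl dotvC. Qed.

Lemma dotvNr u w : dotv w (- u) = - dotv w u.
Proof. by rewrite dotvC dotvNl dotvC. Qed.

Lemma dotv0l w : dotv 0 w = 0.
Proof. by rewrite -(scale0r 0) dotvZl mul0r. Qed.

Lemma dotvv_ge0 v : 0 <= dotv v v.
Proof. by apply: sumr_ge0 => i _; rewrite -expr2 sqr_ge0. Qed.

Lemma dotvvB u v : dotv (u - v) (u - v) = dotv (v - u) (v - u).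
Proof. by rewrite -opprB dotvNl dotvNr opprK. Qed.

Lemma dotvvD u v : dotv (u + v) (u + v) = dotv u u + 2 * dotv u v + dotv v v.
Proof.
rewrite dotvDl !dotvDr (dotvC v u) addrA; congr (_ + _).
by rewrite -addrA -mulr2n mulr_natl.
Qed.

Lemma sqr_coord_le_dotvv v i : v ord0 i ^+ 2 <= dotv v v.
Proof.
rewrite /dotv (bigD1 i) //= -expr2 lerDl.
by apply: sumr_ge0 => j _; rewrite -expr2 sqr_ge0.
Qed.

Lemma dotvv_eq0 v : dotv v v = 0 -> v = 0.
Proof.
move=> v0; apply/rowP => i; rewrite mxE.
have : v ord0 i ^+ 2 <= 0 by rewrite -v0 sqr_coord_le_dotvv.
by rewrite le_eqVlt ltNge sqr_ge0 orbF sqrf_eq0 => /eqP.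
Qed.

Lemma enorm_ge0 v : 0 <= enorm v.
Proof. exact: sqrtr_ge0. Qed.

Lemma sqr_enorm v : enorm v ^+ 2 = dotv v v.
Proof. by rewrite sqr_sqrtr // dotvv_ge0. Qed.

Lemma enormZ (c : R) v : enorm (c *: v) = `|c| * enorm v.
Proof.
by rewrite /enorm dotvZl dotvZr mulrA -expr2 sqrtrM ?sqrtr_sqr // sqr_ge0.
Qed.

Lemma enormB u v : enorm (u - v) = enorm (v - u).
Proof. by rewrite -opprB -scaleN1r enormZ normrN1 mul1r. Qed.

Lemma enorm0 : enorm (0 : 'rV[R]_n) = 0.
Proof. by rewrite /enorm dotv0l sqrtr0. Qed.

Lemma enorm_eq0 v : enorm v = 0 -> v = 0.
Proof. by move=> v0; apply: dotvv_eq0; rewrite -sqr_enorm v0 expr0n. Qed.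

Lemma enorm_gt0 v : v != 0 -> 0 < enorm v.
Proof.
move=> v0; rewrite lt_neqAle enorm_ge0 andbT eq_sym.
by apply: contra v0 => /eqP/enorm_eq0 ->.
Qed.

Lemma enorm_normalize v : v != 0 -> enorm ((enorm v)^-1 *: v) = 1.
Proof.
move=> v0; rewrite enormZ ger0_norm ?invr_ge0 ?enorm_ge0 //.
by rewrite mulVf // gt_eqF // enorm_gt0.
Qed.

Lemma normr_le_enorm v : `|v| <= enorm v.
Proof.
rewrite (_ : `|v| = mx_norm v) // mx_normrE.
apply/bigmax_leP; split => [|[i j] _ /=]; first exact: enorm_ge0.
rewrite (ord1 i) -(ler_pXn2r (_ : 0 < 2)%N) ?nnegrE ?enorm_ge0 //.
by rewrite sqr_enorm real_normK ?num_real // sqr_coord_le_dotvv.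
Qed.

Lemma enorm_le_dotv_add v (h : 'rV[R]_n) : v != 0 ->
  enorm (v + h) <= enorm v + (dotv v h + dotv h h) / enorm v.
Proof.
move=> v0; have s0 := enorm_gt0 v0.
set s := enorm v; set B := dotv v h; set C := dotv h h.
have C0 : 0 <= C by exact: dotvv_ge0.
have ss : s ^+ 2 = dotv v v by rewrite sqr_enorm.
have Y0 : 0 <= s ^+ 2 + B + C.
  have := dotvv_ge0 (v + 2^-1 *: h).
  by rewrite dotvvD dotvZr dotvZl dotvZr -ss -/B -/C; lra.
have -> : s + (B + C) / s = (s ^+ 2 + B + C) / s by field; rewrite gt_eqF.
rewrite -(ler_pXn2r (_ : 0 < 2)%N) ?nnegrE ?enorm_ge0 ?divr_ge0 ?(ltW s0) //.
rewrite sqr_enorm dotvvD -ss -/B -/C expr_div_n ler_pdivlMr ?exprn_gt0 //.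
have : 0 <= s ^+ 2 * C + (B + C) ^+ 2 by rewrite addr_ge0 ?sqr_ge0 // mulr_ge0 ?sqr_ge0.
by move=> H; rewrite -subr_ge0 (_ : _ - _ = s ^+ 2 * C + (B + C) ^+ 2) //; ring.
Qed.

End euclidean.

Section euclidean_limits.
Variables (R : realType) (n : nat) (T : Type) (F : set_system T).
Context {FF : Filter F}.
Implicit Types (f g : T -> 'rV[R]_n) (a b : 'rV[R]_n).

Lemma cvg_dotv f g a b : f @ F --> a -> g @ F --> b ->
  (fun x => dotv (f x) (g x)) @ F --> dotv a b.
Proof.
move=> fa gb; apply: (@cvg_big R 'I_n +%R 0 xpredT _); first exact: add_continuous.
have cvg_coord (h : T -> 'rV[R]_n) (c : 'rV[R]_n) i :
    h @ F --> c -> (fun x => h x ord0 i) @ F --> c ord0 i.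
  move=> hc; apply: (cvg_comp h (fun M : 'rV[R]_n => M ord0 i) hc).
  exact: coord_continuous.
by move=> i _; apply: cvgM; exact: cvg_coord.
Qed.

Lemma cvg_enorm f a : f @ F --> a -> (fun x => enorm (f x)) @ F --> enorm a.
Proof.
move=> fa; apply: (cvg_comp _ _ (cvg_dotv fa fa)).
exact: sqrt_continuous.
Qed.

Lemma cvg_enormB0 f a : f @ F --> a -> (fun x => enorm (f x - a)) @ F --> 0.
Proof.
move=> fa; rewrite -(enorm0 R n) -(subrr a).
by apply: cvg_enorm; apply: cvgB => //; exact: cvg_cst.
Qed.

Lemma enormB0_cvg f a : (fun x => enorm (f x - a)) @ F --> 0 -> f @ F --> a.
Proof.
move=> /cvgr0Pnorm_lt fa; apply/subr_cvg0/cvgr0Pnorm_lt => e /fa.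
apply: filterS => x /=; apply: le_lt_trans.
by rewrite (le_trans (normr_le_enorm _)) // ger0_norm // enorm_ge0.
Qed.

End euclidean_limits.

Lemma enorm_continuous (R : realType) n : continuous (@enorm R n).
Proof. by move=> a; apply: (@cvg_enorm R n _ (nbhs a) _ id); exact: cvg_id. Qed.

Lemma invS_cvg0 (R : realType) : (fun k : nat => (k.+1%:R : R)^-1) @ \oo --> (0 : R).
Proof.
apply/cvgr0Pnorm_lt => e e0; near=> k.
rewrite ger0_norm ?invr_ge0 ?ler0n //.
near: k; exact: (near_infty_natSinv_lt (PosNum e0)).
Unshelve. all: by end_near. Qed.

Section sequence_bounds.
Variables (R : realType) (n : nat) (r : nat -> R).
Hypothesis r0 : r @ \oo --> (0 : R).

Lemma cvg_enormB_le (f : nat -> 'rV[R]_n) (a : 'rV[R]_n) :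
  (forall k, enorm (f k - a) <= r k) -> f @ \oo --> a.
Proof.
move=> fr; apply: enormB0_cvg; apply/cvgr0Pnorm_lt => e e0.
move/cvgr0Pnorm_lt: r0 => /(_ e e0); apply: filterS => k rk.
rewrite ger0_norm ?enorm_ge0 //; exact: le_lt_trans (fr k) (le_lt_trans (ler_norm _) rk).
Qed.

Lemma cvg_dotvv_le (f : nat -> 'rV[R]_n) :
  (forall k, dotv (f k) (f k) <= r k) -> f @ \oo --> (0 : 'rV[R]_n).
Proof.
move=> fr; apply: enormB0_cvg; apply/cvgr0Pnorm_lt => e e0.
move/cvgr0Pnorm_lt: r0 => /(_ (e ^+ 2) (exprn_gt0 _ e0)); apply: filterS => k rk.
rewrite subr0 ger0_norm ?enorm_ge0 //.
rewrite -(ltr_pXn2r (_ : 0 < 2)%N) ?nnegrE ?enorm_ge0 ?ltW // sqr_enorm.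
exact: le_lt_trans (fr k) (le_lt_trans (ler_norm _) rk).
Qed.

End sequence_bounds.

Lemma cvg_scale_normalize (R : realType) n p (c : nat -> R) (w : nat -> 'rV[R]_n)
    (v : nat -> 'rV[R]_p) (u : 'rV[R]_n) (l : 'rV[R]_p) :
  (forall k, 0 < c k) -> (fun k => c k *: w k) @ \oo --> u -> enorm u = 1 ->
  (fun k => c k *: v k) @ \oo --> l ->
  (fun k => (enorm (w k))^-1 *: v k) @ \oo --> l.
Proof.
move=> c0 cwu u1 cvl.
have -> : (fun k => (enorm (w k))^-1 *: v k) =
    (fun k => (enorm (c k *: w k))^-1 *: (c k *: v k)).
  apply: funext => k; rewrite enormZ gtr0_norm // scalerA invfM.
  by rewrite mulrAC mulVf ?gt_eqF // mul1r.
rewrite -[l]scale1r -[1]invr1; apply: cvgZ => //.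
by apply: cvgV; [rewrite oner_eq0|rewrite -u1; exact: cvg_enorm].
Qed.

Lemma cvgn_infty_ge (s : nat -> nat) : (forall k, (k <= s k)%N) -> s @ \oo --> \oo.
Proof. by move=> hs P [N _ HN]; exists N => // k /= kN; apply/HN/(leq_trans kN). Qed.

Lemma cvg_subseq_of_frequently (R : realType) m (v : nat -> 'rV[R]_m) (l : 'rV[R]_m) :
  (forall k N : nat, exists2 p, (N <= p)%N & `|l - v p| < k.+1%:R^-1) ->
  exists2 phi : nat -> nat, phi @ \oo --> \oo & v \o phi @ \oo --> l.
Proof.
move=> freq; pose g k N := proj1_sig (cid2 (freq k N)).
have gP k N : (N <= g k N)%N /\ `|l - v (g k N)| < k.+1%:R^-1.
  by rewrite /g; case: cid2.
pose fix phi k := if k is k'.+1 then g k (phi k').+1 else g 0%N 0%N.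
exists phi.
  apply: cvgn_infty_ge; elim => // k IH /=.
  by apply: leq_trans (gP _ _).1; rewrite ltnS.
have phiP k : `|l - v (phi k)| < k.+1%:R^-1 by case: k => [|k]; exact: (gP _ _).2.
apply/cvgrPdist_lt => e e0; near=> k.
apply: lt_trans (phiP k) _; near: k.
exact: (near_infty_natSinv_lt (PosNum e0)).
Unshelve. all: by end_near. Qed.

Lemma unit_sphere_cvg_subseq (R : realType) m (v : nat -> 'rV[R]_m) :
  (forall k, enorm (v k) = 1) ->
  exists phi : nat -> nat, exists2 l : 'rV[R]_m,
    phi @ \oo --> \oo /\ v \o phi @ \oo --> l & enorm l = 1.
Proof.
move=> v1; pose S := [set w : 'rV[R]_m | enorm w = 1].
have cS : compact S.
  apply: bounded_closed_compact.
    exists 1; split; first exact: num_real.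
    by move=> M M1 w /= Sw; rewrite (le_trans (normr_le_enorm _)) // Sw ltW.
  apply: (@preimage_closed _ _ (@enorm R m) [set x | x = 1]); last exact: closed_eq.
  by move=> x _; exact: enorm_continuous.
have [l [Sl cl]] : S `&` cluster (v @ \oo) !=set0.
  by apply: cS; exists 0%N => // k _; exact: v1.
suff [phi phioo vl] : exists2 phi, phi @ \oo --> \oo & v \o phi @ \oo --> l.
  by exists phi, l.
apply: cvg_subseq_of_frequently => k N.
case: (cl (v @` [set p | (N <= p)%N]) (ball l k.+1%:R^-1)).
- by exists N => // p /= Np; exists p.
- by apply: nbhsx_ballx; rewrite invr_gt0.
move=> w [[p /= Np <-]] vp; exists p => //.
by move: (vp : ball l k.+1%:R^-1 (v p)); rewrite -ball_normE.
Qed.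

Lemma pnorm_ge0 (R : realType) n m (h : 'rV[R]_n * 'rV[R]_m) : 0 <= pnorm h.
Proof. exact: sqrtr_ge0. Qed.

Lemma rnormalZ (R : realType) n m (Q : set ('rV[R]_n * 'rV[R]_m)) z
    (a : 'rV[R]_n) (b : 'rV[R]_m) (c : R) :
  0 <= c -> rnormal Q z (a, b) -> rnormal Q z (c *: a, c *: b).
Proof.
move=> c0 [Qz zab]; split => // eps eps0.
have c1 : 0 < c + 1 by rewrite ltr_wpDl.
have [del del0 hd] := zab (eps / (c + 1)) (divr_gt0 eps0 c1).
exists del => // w Qw wd; rewrite /pdot /= !dotvZl -mulrDr.
rewrite (le_trans (ler_wpM2l c0 (hd w Qw wd))) // mulrA ler_wpM2r ?pnorm_ge0 //.
by rewrite mulrCA ler_piMr ?(ltW eps0) // ler_pdivrMr // mul1r lerDl.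
Qed.

Lemma near_sign_agree (R : realType) m (I : finType) (e : I -> 'rV[R]_m)
    (nu : nat -> 'rV[R]_m) (l : 'rV[R]_m) :
  nu @ \oo --> l ->
  \forall k \near \oo, forall i, dotv l (e i) != 0 ->
    0 < dotv l (e i) * dotv (nu k) (e i).
Proof.
move=> nul; apply: filter_forall => i.
have [->|li0] := eqVneq (dotv l (e i)) 0; first by apply: nearW => k /eqP.
have : (fun k => dotv l (e i) * dotv (nu k) (e i)) @ \oo --> dotv l (e i) ^+ 2.
  by apply: cvgM; [exact: cvg_cst|apply: cvg_dotv nul _; exact: cvg_cst].
move/cvgr_gt => /(_ 0); rewrite lt_neqAle sqr_ge0 andbT eq_sym sqrf_eq0 li0.
by move=> /(_ isT); apply: filterS => k.
Qed.

Section approaching_sequences.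
Variables (R : realType) (n m : nat) (Phi : 'rV[R]_n -> set 'rV[R]_m).
Variables (xb : 'rV[R]_n) (yb : 'rV[R]_m) (u : 'rV[R]_n).

(* The data common to the sequences in the definitions of quasi-normality and
   strong asymptotic regularity: (x_k, y_k) -> (xb, yb) in direction (u, 0)
   with regular normals (eta_k, - lam_k) and eta_k -> 0. *)
Record approach_seq (x : nat -> 'rV[R]_n) (y : nat -> 'rV[R]_m)
    (lam : nat -> 'rV[R]_m) (eta : nat -> 'rV[R]_n) : Prop := ApproachSeq {
  approach_gph : forall k, gph Phi (x k, y k);
  approach_neq : forall k, x k != xb;
  approach_x : x @ \oo --> xb;
  approach_y : y @ \oo --> yb;
  approach_eta : eta @ \oo --> (0 : 'rV[R]_n);
  approach_xdir : (fun k => (enorm (x k - xb))^-1 *: (x k - xb)) @ \oo --> u;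
  approach_ydir : (fun k => (enorm (x k - xb))^-1 *: (y k - yb)) @ \oo --> (0 : 'rV[R]_m);
  approach_rcoder : forall k, rcoder Phi (x k) (y k) (lam k) (eta k) }.

Lemma approach_seq_comp x y lam eta (s : nat -> nat) :
  s @ \oo --> \oo -> approach_seq x y lam eta ->
  approach_seq (x \o s) (y \o s) (lam \o s) (eta \o s).
Proof.
move=> soo [gx nx cx cy ceta dx dy rc].
split=> [k|k||||||k]; rewrite /=.
- exact: gx.
- exact: nx.
- exact: (cvg_comp s _ soo cx).
- exact: (cvg_comp s _ soo cy).
- exact: (cvg_comp s _ soo ceta).
- exact: (cvg_comp s _ soo dx).
- exact: (cvg_comp s _ soo dy).
- exact: rc.
Qed.

Lemma approach_mker_dlcoder x y lam eta l :
  approach_seq x y lam eta -> lam @ \oo --> l -> mker (dlcoder Phi xb yb u 0) l.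
Proof.
case=> gx nx cx cy ceta dx dy rc laml.
have t0 k : 0 < enorm (x k - xb) by apply: enorm_gt0; rewrite subr_eq0.
exists (fun k => enorm (x k - xb)),
  (fun k => ((enorm (x k - xb))^-1 *: (x k - xb), (enorm (x k - xb))^-1 *: (y k - yb))),
  (fun k => (eta k, - lam k)).
split=> //; split; first exact: cvg_enormB0.
split; first exact: (cvg_pair dx dy).
split; first exact: (cvg_pair ceta (cvgN laml)).
move=> k /=; rewrite !scalerA !mulrV ?unitfE ?gt_eqF // !scale1r.
by rewrite !(addrC xb) !(addrC yb) !subrK; exact: rc.
Qed.

Lemma quasi_normal_no_aligned_approach (e : 'I_m -> 'rV[R]_m) x y lam eta :
  quasi_normal_dir Phi xb yb u e -> approach_seq x y lam eta ->
  (forall k, y k != yb) ->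
  (fun k => (enorm (y k - yb))^-1 *: (y k - yb) - lam k) @ \oo --> (0 : 'rV[R]_m) ->
  False.
Proof.
move=> QN ap yne nulam.
pose nu k := (enorm (y k - yb))^-1 *: (y k - yb).
have nu1 k : enorm (nu k) = 1 by apply: enorm_normalize; rewrite subr_eq0.
have [phi [l [phioo nul] l1]] := unit_sphere_cvg_subseq nu1.
have [N _ signN] := near_sign_agree e nul.
pose psi k := phi (k + N)%N.
have addNoo : (fun k => (k + N)%N) @ \oo --> \oo.
  exact: cvgn_infty_ge (fun k => leq_addr N k).
have psioo : psi @ \oo --> \oo := cvg_comp _ _ addNoo phioo.
have lampsi : lam \o psi @ \oo --> l.
  have -> : lam \o psi = (fun k => nu (psi k) - (nu (psi k) - lam (psi k))).
    by apply: funext => k; rewrite /= opprB addrC subrK.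
  rewrite -[l]subr0; apply: cvgB; first exact: (cvg_comp _ _ addNoo nul).
  exact: (cvg_comp _ _ psioo nulam).
have ap' := approach_seq_comp psioo ap.
apply: QN; exists l; split.
  by apply: contra_eqN l1 => /eqP ->; rewrite enorm0 eq_sym oner_eq0.
split; first exact: approach_mker_dlcoder ap' lampsi.
case: ap' => gx nx cx cy ceta dx dy rc.
exists (x \o psi), (y \o psi), (lam \o psi), (eta \o psi); do 9 split => //.
move=> k i li; have := signN (k + N)%N (leq_addl _ _) i li.
by rewrite /nu dotvZl mulrCA pmulr_rgt0 // invr_gt0 enorm_gt0 // subr_eq0.
Qed.

Lemma quasi_normal_strong_asym_reg e :
  Phi xb yb -> quasi_normal_dir Phi xb yb u e -> strong_asym_reg_dir Phi xb yb u.
Proof.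
move=> Pb QN x y xs lam xs0 ys0 gx nPx yne rc cx cy cxs dx dy lamoo align _.
exfalso; apply: (quasi_normal_no_aligned_approach
  (lam := fun k => (enorm (lam k))^-1 *: lam k)
  (eta := fun k => (enorm (lam k))^-1 *: xs k) QN _ yne align).
have lam0 : (fun k => (enorm (lam k))^-1) @ \oo --> (0 : R).
  apply/cvgr0Pnorm_lt => eps eps0.
  move/cvgryPgt: lamoo => /(_ eps^-1); apply: filterS => k lk.
  have lk0 : 0 < enorm (lam k) by apply: lt_trans lk; rewrite invr_gt0.
  by rewrite ger0_norm ?invr_ge0 ?enorm_ge0 // invf_plt.
split => //.
- by move=> k; apply/eqP => xk; apply: (nPx k); rewrite xk.
- by rewrite -(scale0r xs0); apply: cvgZ.
- move=> k; rewrite /rcoder /= -scalerN; apply: rnormalZ (rc k).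
  by rewrite invr_ge0 enorm_ge0.
Qed.

End approaching_sequences.

Section penalty.
Variables (R : realType) (n m : nat) (x0 : 'rV[R]_n) (yb : 'rV[R]_m) (be : R).

Definition penalty (p : 'rV[R]_n * 'rV[R]_m) : R :=
  enorm (p.2 - yb) + be * dotv (p.1 - x0) (p.1 - x0).

Lemma penalty_continuous : continuous penalty.
Proof.
move=> p; apply: cvgD.
  by apply: cvg_enorm; apply: cvgB; [exact: cvg_snd|exact: cvg_cst].
apply: cvgM; first exact: cvg_cst.
by apply: cvg_dotv; apply: cvgB; (exact: cvg_fst || exact: cvg_cst).
Qed.

Hypothesis be0 : 0 < be.

Lemma penalty_ge p :
  enorm (p.2 - yb) <= penalty p /\ be * dotv (p.1 - x0) (p.1 - x0) <= penalty p.
Proof.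
by split; rewrite /penalty ?lerDl ?lerDr ?enorm_ge0 // mulr_ge0 ?dotvv_ge0 // ltW.
Qed.

Lemma penalty_min_exists (Q : set ('rV[R]_n * 'rV[R]_m)) :
  closed Q -> Q !=set0 -> exists2 p, Q p & forall q, Q q -> penalty p <= penalty q.
Proof.
move=> cQ [q0 Qq0]; pose M := penalty q0.
pose A := Q `&` [set p | penalty p <= M].
pose C1 := 1 + M / be + `|x0|; pose C2 := M + `|yb|.
have cball k (C : R) : compact [set v : 'rV[R]_k | `|v| <= C].
  apply: bounded_closed_compact.
    exists C; split; first exact: num_real.
    by move=> N CN w /= wC; apply: le_trans wC (ltW CN).
  apply: (@preimage_closed _ _ (fun v : 'rV[R]_k => `|v|) [set t | t <= C]).
    by move=> v _; exact: norm_continuous.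
  exact: closed_le.
have cA : compact A.
  apply: (@subclosed_compact _ A ([set x | `|x| <= C1] `*` [set y | `|y| <= C2])).
  - apply: closedI => //.
    apply: (@preimage_closed _ _ penalty [set t | t <= M]); last exact: closed_le.
    by move=> p _; exact: penalty_continuous.
  - by apply: compact_setX; exact: cball.
  - move=> [p1 p2] [_ /= pM]; have [py px] := penalty_ge (p1, p2); split => /=.
    + rewrite -(subrK x0 p1) (le_trans (ler_normD _ _)) // lerD2r.
      apply: (le_trans (normr_le_enorm _)).
      apply: (le_trans (_ : _ <= 1 + enorm (p1 - x0) ^+ 2)); first by nra.
      by rewrite lerD2l sqr_enorm ler_pdivlMr // mulrC (le_trans px).
    + rewrite -(subrK yb p2) (le_trans (ler_normD _ _)) // lerD2r.
      exact: le_trans (normr_le_enorm _) (le_trans py pM).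
have [p Ap pmin] := compact_EVT_min (A := A) (ex_intro _ q0 (conj Qq0 (lexx _))) cA
  (continuous_subspaceT penalty_continuous).
move: Ap; rewrite inE => -[Qp pM]; exists p => // q Qq.
have [qM|/ltW Mq] := leP (penalty q) M; last exact: le_trans pM Mq.
by apply: pmin; rewrite inE.
Qed.

(* Fermat's rule for the penalty: expanding |y - yb| to first order around a
   minimiser (xt, yt) with yt <> yb shows that minus its gradient is a regular
   normal to Q. *)
Lemma rnormal_penalty_min (Q : set ('rV[R]_n * 'rV[R]_m)) xt yt :
  Q (xt, yt) -> yt != yb -> (forall q, Q q -> penalty (xt, yt) <= penalty q) ->
  rnormal Q (xt, yt)
    ((2 * be) *: (x0 - xt), - ((enorm (yt - yb))^-1 *: (yt - yb))).
Proof.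
move=> Qt ytb tmin; split => // eps eps0.
set s := enorm (yt - yb).
have s0 : 0 < s by apply: enorm_gt0; rewrite subr_eq0.
set Cc := be + s^-1.
have Cc0 : 0 < Cc by rewrite addr_gt0 // invr_gt0.
exists (eps / Cc); first by rewrite divr_gt0.
move=> [w1 w2] Qw /=; set P := pnorm _ => wP.
have := tmin (w1, w2) Qw; rewrite /penalty /=.
have -> : w2 - yb = (yt - yb) + (w2 - yt) by rewrite [RHS]addrC addrA subrK.
have -> : w1 - x0 = (xt - x0) + (w1 - xt) by rewrite [RHS]addrC addrA subrK.
rewrite (dotvvD (xt - x0) (w1 - xt)) => hge.
have ytb0 : yt - yb != 0 by rewrite subr_eq0.
have hn := enorm_le_dotv_add (w2 - yt) ytb0.
have P0 : 0 <= P by exact: pnorm_ge0.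
have P2 : P ^+ 2 = dotv (w1 - xt) (w1 - xt) + dotv (w2 - yt) (w2 - yt).
  by rewrite /P /pnorm sqr_sqrtr // /pdot /= addr_ge0 ?dotvv_ge0.
have CP : Cc * P <= eps by rewrite mulrC -ler_pdivlMr // ltW.
rewrite /pdot /= dotvZl dotvNl dotvZl -(opprB xt x0) dotvNl.
move: hge hn P2 CP; rewrite -/s.
set D2 := dotv (xt - x0) (xt - x0); set Dh := dotv (xt - x0) (w1 - xt).
set H1 := dotv (w1 - xt) (w1 - xt); set B := dotv (yt - yb) (w2 - yt).
set H2 := dotv (w2 - yt) (w2 - yt); set E := enorm _.
move=> hge hn P2 CP.
have H10 : 0 <= H1 by exact: dotvv_ge0.
have H20 : 0 <= H2 by exact: dotvv_ge0.
have si0 : 0 < s^-1 by rewrite invr_gt0.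
have f1 : 0 <= H1 / s by rewrite divr_ge0 // ltW.
have f2 : 0 <= be * H2 by rewrite mulr_ge0 // ltW.
have f3 : 0 <= (eps - Cc * P) * P by rewrite mulr_ge0 // subr_ge0.
have hn' : E <= s + B * s^-1 + H2 * s^-1 by rewrite -addrA -mulrDl.
have hge' : s + be * D2 <= E + be * D2 + 2 * (be * Dh) + be * H1.
  by move: hge; rewrite !mulrDr !addrA mulrCA.
have Pm : (be + s^-1) * P ^+ 2 <= eps * P by rewrite expr2 mulrA -subr_ge0 -mulrBl.
rewrite P2 !mulrDr !mulrDl in Pm.
have -> : 2 * be * - Dh - s^-1 * B = - (2 * (be * Dh)) - B / s by ring.
lra.
Qed.

End penalty.

Lemma edist_not_le_witness (R : realType) n m (S : set 'rV[R]_n) (T : set 'rV[R]_m)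
    (x0 : 'rV[R]_n) (yb : 'rV[R]_m) (c : R) :
  0 < c -> S !=set0 -> ~ (Defs.edist x0 S <= c%:E * Defs.edist yb T)%E ->
  exists a, exists2 y, T y &
    [/\ 0 < a, enorm (y - yb) < a / c & forall z, S z -> a <= enorm (x0 - z)].
Proof.
move=> c0 [z0 Sz0] hnot.
have dS0 : (0 <= Defs.edist x0 S)%E.
  by apply: le_ereal_inf_tmp => _ [z _ <-]; rewrite lee_fin enorm_ge0.
have dSz z : S z -> (Defs.edist x0 S <= (enorm (x0 - z))%:E)%E.
  by move=> Sz; apply: ereal_inf_lbound; exists z.
have dT0 : (0 <= Defs.edist yb T)%E.
  by apply: le_ereal_inf_tmp => _ [y _ <-]; rewrite lee_fin enorm_ge0.
have dTlt t : (Defs.edist yb T < t%:E)%E -> exists2 y, T y & enorm (y - yb) < t.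
  by move=> /ereal_inf_lt [_ [y Ty <-]]; rewrite lte_fin => yt; exists y; rewrite // enormB.
have {hnot} : (c%:E * Defs.edist yb T < Defs.edist x0 S)%E by rewrite ltNge; apply/negP.
move: dS0 dSz (dSz z0 Sz0); case: (Defs.edist x0 S) => [a| |] // a0 az _.
move: dT0 dTlt; case: (Defs.edist yb T) => [r| |] //; last first.
  by move=> _ _; rewrite muleC gt0_mulye ?lte_fin // ltNge leey.
rewrite -EFinM !lee_fin lte_fin in a0 * => r0 dTlt cra.
have apos : 0 < a by apply: le_lt_trans cra; rewrite mulr_ge0 // ltW.
have [y Ty ya] : exists2 y, T y & enorm (y - yb) < a / c.
  by apply: dTlt; rewrite lte_fin ltr_pdivlMr // mulrC.
by exists a, y => //; split => // z /az; rewrite lee_fin.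
Qed.

Lemma divr_exprn_le_inv (R : realType) (K c : R) j :
  1 <= K -> 0 <= c -> c <= 1 -> (0 < j)%N -> c / K ^+ j <= K^-1.
Proof.
move=> K1 c0 c1 j0; have K0 : 0 < K by apply: lt_le_trans K1.
rewrite ler_pdivrMr ?exprn_gt0 // -(prednK j0) exprS mulrA mulVf ?gt_eqF // mul1r.
by apply: le_trans c1 _; rewrite exprn_ege1.
Qed.

Section metric_subregularity.
Variables (R : realType) (n m : nat) (Phi : 'rV[R]_n -> set 'rV[R]_m).
Variables (xb : 'rV[R]_n) (yb : 'rV[R]_m).

Record subreg_witness (K : R) (x0 : 'rV[R]_n) (a : R) (xt : 'rV[R]_n) (yt : 'rV[R]_m)
    : Prop := SubregWitness {
  witness_pos : 0 < a;
  witness_le_dist : a <= enorm (x0 - xb);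
  witness_gph : gph Phi (xt, yt);
  witness_notin : ~ Phi xt yb;
  witness_y : enorm (yt - yb) <= a / K ^+ 2;
  witness_x : dotv (xt - x0) (xt - x0) <= a ^+ 2 / K ^+ 3;
  witness_rcoder : rcoder Phi xt yt ((enorm (yt - yb))^-1 *: (yt - yb))
                     ((2 * (K / a)) *: (x0 - xt));
  witness_eta : dotv ((2 * (K / a)) *: (x0 - xt)) ((2 * (K / a)) *: (x0 - xt)) <= 4 / K }.

Hypotheses (cPhi : closed (gph Phi)) (Pb : Phi xb yb).

(* With a = dist(x0, Phi^-1(yb)) > K^2 dist(yb, Phi(x0)), minimise
   |y - yb| + (K / a) |x - x0|^2 over the graph; the minimiser stays within
   a / K^(3/2) of x0, hence off Phi^-1(yb), and Fermat's rule applies there. *)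
Lemma subreg_witness_exists (K : R) (x0 : 'rV[R]_n) : 1 <= K ->
  ~ (Defs.edist x0 [set z | Phi z yb] <= (K ^+ 2)%:E * Defs.edist yb (Phi x0))%E ->
  exists a xt yt, subreg_witness K x0 a xt yt.
Proof.
move=> K1 fail; have K0 : 0 < K by apply: lt_le_trans K1.
have [a [y Py [a0 ya aS]]] :=
  edist_not_le_witness (exprn_gt0 2 K0) (ex_intro _ xb Pb) fail.
pose be := K / a; have be0 : 0 < be by rewrite divr_gt0.
have [[xt yt] gt tmin] :=
  penalty_min_exists x0 yb be0 cPhi (ex_intro _ (x0, y) Py).
have small : penalty x0 yb be (xt, yt) < a / K ^+ 2.
  apply: le_lt_trans (tmin (x0, y) Py) _.
  by rewrite /penalty /= subrr dotv0l mulr0 addr0.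
have [/= hy hx] := penalty_ge x0 yb be0 (xt, yt).
have xclose : dotv (xt - x0) (xt - x0) < a ^+ 2 / K ^+ 3.
  have -> : a ^+ 2 / K ^+ 3 = (a / K ^+ 2) / be.
    by rewrite /be; field; rewrite !gt_eqF.
  by rewrite ltr_pdivlMr // mulrC (le_lt_trans hx).
have notin : ~ Phi xt yb.
  move=> /aS; rewrite enormB => axt.
  have : a ^+ 2 < a ^+ 2 / K ^+ 3.
    by apply: le_lt_trans xclose; rewrite -sqr_enorm ler_pXn2r ?nnegrE ?enorm_ge0 // ltW.
  by rewrite ltr_pdivlMr ?exprn_gt0 // ltNge ler_peMr ?sqr_ge0 ?exprn_ege1.
have ytb : yt != yb by apply: contraPneq notin => <-.
exists a, xt, yt; split => //.
- exact: aS.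
- exact: ltW (le_lt_trans hy small).
- exact: ltW.
- exact: rnormal_penalty_min.
- rewrite dotvZl dotvZr mulrA dotvvB.
  apply: le_trans (ler_wpM2l _ (ltW xclose)) _; first by rewrite mulr_ge0 // mulr_ge0 // ltW.
  by rewrite le_eqVlt; apply/orP; left; apply/eqP; rewrite /be; field; rewrite !gt_eqF.
Qed.

Lemma not_metric_subreg_points (u : 'rV[R]_n) : ~ metric_subreg_dir Phi xb yb u ->
  forall k : nat, exists x0 : 'rV[R]_n,
    Bdir k.+1%:R^-1 k.+1%:R^-1 u (x0 - xb) /\
    ~ (Defs.edist x0 [set z | Phi z yb] <=
       ((k.+1%:R : R) ^+ 2)%:E * Defs.edist yb (Phi x0))%E.
Proof.
move=> nM k; apply: contrapT => hn; apply: nM.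
exists k.+1%:R^-1, k.+1%:R^-1, (k.+1%:R ^+ 2).
split; first by rewrite invr_gt0 ltr0n.
split; first by rewrite invr_gt0 ltr0n.
split; first by rewrite exprn_gt0 // ltr0n.
by move=> x hB; apply: contrapT => hx; apply: hn; exists x.
Qed.

Section witness_sequences.
Variables (u : 'rV[R]_n) (x0 xt : nat -> 'rV[R]_n) (yt : nat -> 'rV[R]_m) (a : nat -> R).
Hypothesis u1 : enorm u = 1.
Hypothesis x0B : forall k, Bdir k.+1%:R^-1 k.+1%:R^-1 u (x0 k - xb).
Hypothesis W : forall k, subreg_witness k.+1%:R (x0 k) (a k) (xt k) (yt k).

Let rho k := enorm (x0 k - xb).
Let K1 k : 1 <= (k.+1%:R : R). Proof. by rewrite ler1n. Qed.
Let a0 k : 0 < a k. Proof. exact: witness_pos (W k). Qed.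
Let a_rho k : a k <= rho k. Proof. exact: witness_le_dist (W k). Qed.
Let rho0 k : 0 < rho k. Proof. exact: lt_le_trans (a0 k) (a_rho k). Qed.
Let rho_le k : enorm (x0 k - xb) <= k.+1%:R^-1. Proof. exact: (x0B k).2. Qed.
Let a_le1 k : a k <= 1.
Proof. by rewrite (le_trans (a_rho k)) // (le_trans (rho_le k)) // invf_le1 ?K1. Qed.
Let arho0 k : 0 <= a k / rho k. Proof. by rewrite divr_ge0 // ltW. Qed.
Let arho1 k : a k / rho k <= 1. Proof. by rewrite ler_pdivrMr // mul1r. Qed.

Lemma witness_x0_cvg : x0 @ \oo --> xb.
Proof. exact: (cvg_enormB_le (@invS_cvg0 R) rho_le : _ @ \oo --> xb). Qed.

Lemma witness_xt_cvg : xt @ \oo --> xb.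
Proof.
have near k : dotv (xt k - x0 k) (xt k - x0 k) <= k.+1%:R^-1.
  apply: le_trans (witness_x (W k)) (divr_exprn_le_inv (K1 k) (sqr_ge0 _) _ _) => //.
  by rewrite expr_le1 ?a_le1 // ltW.
have -> : xt = (fun k => x0 k + (xt k - x0 k)) by apply: funext => k; rewrite addrC subrK.
rewrite -[xb]addr0; apply: cvgD; first exact: witness_x0_cvg.
exact: (cvg_dotvv_le (@invS_cvg0 R) near : _ @ \oo --> (0 : 'rV[R]_n)).
Qed.

Lemma witness_yt_cvg : yt @ \oo --> yb.
Proof.
apply: (cvg_enormB_le (@invS_cvg0 R) (fun k => le_trans (witness_y (W k)) _)) => k.
exact: divr_exprn_le_inv (K1 k) (ltW (a0 k)) (a_le1 k) _.
Qed.

Lemma witness_eta_cvg :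
  (fun k => (2 * (k.+1%:R / a k)) *: (x0 k - xt k)) @ \oo --> (0 : 'rV[R]_n).
Proof.
apply: (cvg_dotvv_le _ (fun k => witness_eta (W k))).
by rewrite -(mulr0 4); apply: cvgM; [exact: cvg_cst|exact: invS_cvg0].
Qed.

Lemma witness_xdir_cvg : (fun k => (rho k)^-1 *: (xt k - xb)) @ \oo --> u.
Proof.
have x0dir k : enorm ((rho k)^-1 *: (x0 k - xb) - u) <= k.+1%:R^-1.
  have := (x0B k).1; rewrite u1 scale1r mulr1 -/(rho k) => Buk.
  rewrite (_ : _ - u = (rho k)^-1 *: ((x0 k - xb) - rho k *: u)); last first.
    by rewrite [RHS]scalerBr scalerA mulVf ?gt_eqF // scale1r.
  by rewrite enormZ ger0_norm ?invr_ge0 ?(ltW (rho0 k)) // enormB mulrC ler_pdivrMr.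
have xtx0 k : dotv ((rho k)^-1 *: (xt k - x0 k)) ((rho k)^-1 *: (xt k - x0 k))
    <= k.+1%:R^-1.
  rewrite dotvZl dotvZr mulrA.
  apply: le_trans (ler_wpM2l _ (witness_x (W k))) _; first by rewrite mulr_ge0 ?invr_ge0 ?ltW.
  rewrite mulrA (_ : _ * _ * a k ^+ 2 = (a k / rho k) ^+ 2); last by field; rewrite gt_eqF.
  by apply: divr_exprn_le_inv (K1 k) (sqr_ge0 _) _ _ => //; rewrite expr_le1 ?arho0.
have -> : (fun k => (rho k)^-1 *: (xt k - xb)) =
    (fun k => (rho k)^-1 *: (x0 k - xb) + (rho k)^-1 *: (xt k - x0 k)).
  by apply: funext => k; rewrite -scalerDr [in RHS]addrC addrA subrK.
rewrite -[u]addr0; apply: cvgD.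
  exact: (cvg_enormB_le (@invS_cvg0 R) x0dir : _ @ \oo --> u).
exact: (cvg_dotvv_le (@invS_cvg0 R) xtx0 : _ @ \oo --> (0 : 'rV[R]_n)).
Qed.

Lemma witness_ydir_cvg : (fun k => (rho k)^-1 *: (yt k - yb)) @ \oo --> (0 : 'rV[R]_m).
Proof.
have near k : enorm ((rho k)^-1 *: (yt k - yb) - 0) <= k.+1%:R^-1.
  rewrite subr0 enormZ ger0_norm ?invr_ge0 ?(ltW (rho0 k)) //.
  apply: le_trans (ler_wpM2l _ (witness_y (W k))) _; first by rewrite invr_ge0 ltW.
  by rewrite mulrA (mulrC _ (a k)); exact: divr_exprn_le_inv (K1 k) (arho0 k) (arho1 k) _.
exact: (cvg_enormB_le (@invS_cvg0 R) near : _ @ \oo --> (0 : 'rV[R]_m)).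
Qed.

Lemma witness_approach_seq :
  approach_seq Phi xb yb u xt yt (fun k => (enorm (yt k - yb))^-1 *: (yt k - yb))
    (fun k => (2 * (k.+1%:R / a k)) *: (x0 k - xt k)).
Proof.
have rho_inv0 k : 0 < (rho k)^-1 by rewrite invr_gt0.
split=> [k|k||||||k].
- exact: witness_gph (W k).
- by apply/eqP => xtb; apply: (witness_notin (W k)); rewrite xtb.
- exact: witness_xt_cvg.
- exact: witness_yt_cvg.
- exact: witness_eta_cvg.
- exact: cvg_scale_normalize rho_inv0 witness_xdir_cvg u1 witness_xdir_cvg.
- exact: cvg_scale_normalize rho_inv0 witness_xdir_cvg u1 witness_ydir_cvg.
- exact: witness_rcoder (W k).
Qed.

End witness_sequences.

Lemma quasi_normal_metric_subreg (u : 'rV[R]_n) (e : 'I_m -> 'rV[R]_m) :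
  enorm u = 1 -> quasi_normal_dir Phi xb yb u e -> metric_subreg_dir Phi xb yb u.
Proof.
move=> u1 QN; apply: contrapT => /not_metric_subreg_points /choice [x0 x0P].
have /choice [p W] : forall k, exists p : R * 'rV[R]_n * 'rV[R]_m,
    subreg_witness k.+1%:R (x0 k) p.1.1 p.1.2 p.2.
  move=> k; have K1 : 1 <= (k.+1%:R : R) by rewrite ler1n.
  have [a [xt [yt Wk]]] := subreg_witness_exists K1 (x0P k).2.
  by exists (a, xt, yt).
pose yt k := (p k).2.
apply: (quasi_normal_no_aligned_approach QN
  (witness_approach_seq (a := fun k => (p k).1.1) (xt := fun k => (p k).1.2) (yt := yt)
     u1 (fun k => (x0P k).1) W)).
- move=> k; apply/eqP => ytb; apply: (witness_notin (W k)); rewrite -/(yt k) -ytb.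
  exact: witness_gph (W k).
- by under eq_cvg do rewrite subrr; exact: cvg_cst.
Qed.

End metric_subregularity.

Unset Implicit Arguments.

Theorem mainTheorem4 (R : realType) (n m : nat) (Phi : 'rV[R]_n -> set 'rV[R]_m)
  (xb : 'rV[R]_n) (yb : 'rV[R]_m) (u : 'rV[R]_n) (e : 'I_m -> 'rV[R]_m) :
  closed (gph Phi) -> Phi xb yb -> enorm u = 1 ->
  orthonormal_basis e -> quasi_normal_dir Phi xb yb u e ->
  strong_asym_reg_dir Phi xb yb u /\ metric_subreg_dir Phi xb yb u.
Proof.
move=> cPhi Pb u1 _ QN; split; first exact: quasi_normal_strong_asym_reg Pb QN.
exact: (quasi_normal_metric_subreg cPhi Pb u1 QN).
Qed.
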